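(* Let $n\ge1$ and let $a$ be an inversion sequence of length $n$. Then $a$ avoids each of the patterns $102$, $201$, $210$ if and only if $a$ can be written either as $a=p_1\circ p_2$ or as $a=p_1\circ r_2$, where: (i) $p_1$ is a (possibly empty) non-decreasing sequence with $\max(p_1)<\max(a)$ (if nonempty); (ii) $p_2$ is a nonempty sequence with all entries in $\{\max(a),\operatorname{premax}(a)\}$ whose first entry is $\max(a)$; (iii) $r_2=(\max(a),\dots,\max(a),k,\dots,k)$ consists of one or more copies of $\max(a)$ followed by one or more copies of a single value $k$ with $0\le k<\operatorname{premax}(a)$. (When $a$ has only one distinct value, $\operatorname{premax}(a)$ is undefined, and the decomposition is $p_1$ empty and $p_2=a$.)
   Context: An inversion sequence of length $n$ is an integer sequence $(a_1,\dots,a_n)$ with $0\le a_i<i$ for all $i$. A pattern is a sequence $\sigma$ of non-negative integers containing every value from $0$ to $\max(\sigma)$; the reduction of a sequence replaces its smallest values by $0$, the next smallest by $1$, etc. A sequence $a$ contains $\sigma$ if some (not necessarily consecutive) subsequence of $a$ has reduction $\sigma$; otherwise $a$ avoids $\sigma$. For a sequence $a$, $\max(a)$ is its largest value and $\operatorname{premax}(a)$ is the largest value of $a$ strictly less than $\max(a)$. $\circ$ denotes concatenation. *)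

From mathcomp Require Import all_boot.
Set Implicit Arguments. Unset Strict Implicit. Unset Printing Implicit Defensive.

(* Inversion sequence of length n: (a_1,...,a_n) with 0 <= a_i < i (1-indexed);
   with 0-indexed nth: a`_i < i+1. *)
Definition inv_seq (n : nat) (a : seq nat) : Prop :=
  size a = n /\ forall i, i < n -> nth 0 a i < i.+1.

Definition reduction (s : seq nat) : seq nat :=
  [seq size (undup [seq y <- s | y < x]) | x <- s].

Definition contains (a sigma : seq nat) : Prop :=
  exists s, subseq s a /\ reduction s = sigma.

Definition avoids (a sigma : seq nat) : Prop := ~ contains a sigma.

Definition smax (s : seq nat) : nat := \max_(x <- s) x.

(* largest value strictly less than smax s (defaults to 0 if none exists) *)
Definition premax (s : seq nat) : nat := \max_(x <- s | x < smax s) x.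

Definition cond_p1 (a p1 : seq nat) : Prop :=
  sorted leq p1 /\ (p1 != [::] -> smax p1 < smax a).

Definition cond_p2 (a p2 : seq nat) : Prop :=
  p2 != [::] /\ all (fun x => (x == smax a) || (x == premax a)) p2 /\
  head 0 p2 = smax a.

Definition cond_r2 (a r2 : seq nat) : Prop :=
  exists i j k, 0 < i /\ 0 < j /\ k < premax a /\
    r2 = nseq i (smax a) ++ nseq j k.

(* Avoiding 102, 201 and 210 means exactly that no subsequence (x, y, z) has
   y < x and z different from both x and y.  Cut a at the first occurrence of
   its maximum M.  Before the cut every entry is below M, so any descent there
   would form such a triple with M: the prefix is non-decreasing.  After the
   cut, M followed by two different smaller values is again such a triple, so
   the suffix takes only M and one further value c.  If c is not premax(a),
   then premax(a) < M occurs in the prefix and c < premax(a); hence the suffix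
   cannot contain c before an M, which forces the shape M...M c...c.
   Conversely, such a triple in a sorted prefix followed by a suffix with
   values M and c must have its first entry in the prefix and (c, M) in the
   suffix, which both decompositions exclude. *)
From mathcomp Require Import all_boot zify.
Set Implicit Arguments. Unset Strict Implicit.

Definition bad_triple (x y z : nat) := [&& y < x, z != x & z != y].

Definition bad_triple_free (a : seq nat) :=
  forall x y z, subseq [:: x; y; z] a -> ~~ bad_triple x y z.

Local Ltac rewrite_order h := rewrite ?h ?(ltnW h) ?(ltn_geF h)
  ?(leq_gtF (ltnW h)) ?(ltn_eqF h) ?(gtn_eqF h).

Lemma reduction_bad_triple x y z :
  (reduction [:: x; y; z] \in [:: [:: 1; 0; 2]; [:: 2; 0; 1]; [:: 2; 1; 0]])
  = bad_triple x y z.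
Proof.
rewrite /reduction /bad_triple.
case: (ltngtP x y) => h1; case: (ltngtP y z) => h2; case: (ltngtP x z) => h3;
  subst; rewrite_order h1; rewrite_order h2; rewrite_order h3;
  rewrite /= ?ltnn ?leqnn ?eqxx /=;
  do 3 (rewrite ?inE; rewrite_order h1; rewrite_order h2; rewrite_order h3;
        rewrite ?inE ?ltnn ?leqnn ?eqxx //=).
all: lia.
Qed.

Lemma avoids_102_201_210P a :
  (avoids a [:: 1; 0; 2] /\ avoids a [:: 2; 0; 1] /\ avoids a [:: 2; 1; 0]) <->
  bad_triple_free a.
Proof.
set pats := [:: [:: 1; 0; 2]; [:: 2; 0; 1]; [:: 2; 1; 0]].
suff avoidsP : (forall sg, sg \in pats -> avoids a sg) <-> bad_triple_free a.
  rewrite -avoidsP; split=> [[h1 [h2 h3]] sg|h].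
    by rewrite !inE => /orP[/eqP->|/orP[/eqP->|/eqP->]].
  by split; [|split]; apply: h; rewrite !inE eqxx ?orbT.
split=> [h x y z sxyz|h sg sg_pat [s [ss red_s]]].
  apply/negP; rewrite -reduction_bad_triple => sg_pat.
  by apply: h sg_pat _; exists [:: x; y; z].
have size_s : size s = 3.
  rewrite -(size_map (fun x => size (undup [seq y <- s | y < x]))) -/(reduction s).
  by rewrite red_s; move: sg_pat; rewrite !inE => /orP[/eqP->|/orP[/eqP->|/eqP->]].
case: s ss red_s size_s => [|x [|y [|z [|? ?]]]] // ss red_s _.
by have := h _ _ _ ss; rewrite -reduction_bad_triple red_s sg_pat.
Qed.

Lemma subseq_cat_split (T : eqType) (s p q : seq T) : subseq s (p ++ q) ->
  exists s1 s2, [/\ s = s1 ++ s2, subseq s1 p & subseq s2 q].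
Proof.
elim: p s => [|u p IH] s /=; first by move=> ss; exists [::], s.
case: s => [|x s]; first by move=> _; exists [::], [::]; rewrite !sub0seq.
case: eqP => [->|_] /IH [s1 [s2 [-> ss1 ss2]]].
  by exists (u :: s1), s2; rewrite /= eqxx.
by exists s1, s2; split=> //; apply: subseq_trans ss1 (subseq_cons _ _).
Qed.

Lemma subseq_pair_either (T : eqType) (x y : T) s : x \in s -> y \in s -> x != y ->
  subseq [:: x; y] s \/ subseq [:: y; x] s.
Proof.
elim: s => // u s IH; rewrite !inE.
case: (eqVneq x u) => [->|xu]; case: (eqVneq y u) => [->|yu] //=.
- by move=> _ ys _; left; rewrite eqxx sub1seq.
- by move=> xs _ _; right; rewrite eqxx sub1seq.
- by move=> xs ys /(IH xs ys) [] ss; [left|right];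
    apply: subseq_trans ss (subseq_cons _ _).
Qed.

Lemma split_first_occurrence (T : eqType) (x : T) s : x \in s ->
  exists p q, s = p ++ x :: q /\ x \notin p.
Proof.
elim: s => // u s IH; rewrite inE; case: (eqVneq x u) => [->|xu] /= xs.
  by exists [::], s.
have [p [q [-> xp]]] := IH xs.
by exists (u :: p), q; rewrite inE negb_or xu.
Qed.

Lemma sorted_leq_pairs (p : seq nat) :
  (forall x y, subseq [:: x; y] p -> x <= y) -> sorted leq p.
Proof.
elim: p => // u p IH le_pairs; rewrite /= path_sortedE; last exact: leq_trans.
apply/andP; split.
  by apply/allP => y yp; apply: le_pairs; rewrite /= eqxx sub1seq.
by apply: IH => x y ss; apply: le_pairs; apply: subseq_trans ss (subseq_cons _ _).
Qed.

Lemma nseq_cat_nseq_shape (m k : nat) s :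
  {in s, forall w, (w == m) || (w == k)} -> ~ subseq [:: k; m] s ->
  exists i j, s = nseq i m ++ nseq j k.
Proof.
elim: s => [|u s IH] s_mk no_km; first by exists 0, 0.
have s_mk' : {in s, forall w, (w == m) || (w == k)}.
  by move=> w ws; apply: s_mk; rewrite inE ws orbT.
case: (eqVneq u m) => [->|um].
  have [|i [j ->]] := IH s_mk'; last by exists i.+1, j.
  by move=> ss; apply: no_km; apply: subseq_trans ss (subseq_cons _ _).
have /eqP uk : u == k by move: (s_mk u (mem_head _ _)); rewrite (negbTE um).
have ms : m \notin s by apply/negP => ms; apply: no_km; rewrite /= uk eqxx sub1seq.
have /all_pred1P s_k : all (pred1 k) s.
  apply/allP => w ws; move: (s_mk' w ws) => /orP[/eqP wm|//].
  by move: ms; rewrite -wm ws.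
by exists 0, (size s).+1; rewrite /= -s_k uk.
Qed.

Lemma not_subseq_nseq_cat (m k : nat) i j : k != m ->
  ~ subseq [:: k; m] (nseq i m ++ nseq j k).
Proof.
move=> km; elim: i => [|i IH] /=; last by rewrite (negbTE km).
move=> /mem_subseq /(_ m); rewrite !inE eqxx orbT mem_nseq eq_sym (negbTE km).
by rewrite andbF => /(_ isT).
Qed.

Lemma smax_mem s : s != [::] -> smax s \in s.
Proof.
elim: s => // u s IH _; rewrite /smax big_cons -/(smax s) inE.
case: s IH => [|v s] IH; first by rewrite /smax big_nil maxn0 eqxx.
by have := IH isT; rewrite /maxn; case: ifP => _ smax_s; rewrite ?smax_s ?orbT ?eqxx.
Qed.

Lemma leq_smax x s : x \in s -> x <= smax s.
Proof. by move=> xs; apply: (@leq_bigmax_seq _ s xpredT id x). Qed.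

Lemma leq_premax x s : x \in s -> x < smax s -> x <= premax s.
Proof. by move=> xs; apply: (@leq_bigmax_seq _ s (fun y => y < smax s) id x). Qed.

(* [premax] defaults to 0, so a positive [premax] is a genuine entry. *)
Lemma premax_gt0 s : 0 < premax s -> premax s \in s /\ premax s < smax s.
Proof.
have -> : premax s = smax [seq x <- s | x < smax s] by rewrite /smax big_filter.
case: (eqVneq [seq x <- s | x < smax s] [::]) => [->|nil_s].
  by rewrite /smax big_nil.
by move: (smax_mem nil_s); rewrite mem_filter => /andP[-> ->].
Qed.

Section BeforeAndAfterMax.

Variables (p q : seq nat) (m : nat).
Hypothesis no_bad : bad_triple_free (p ++ m :: q).
Hypothesis p_lt : {in p, forall x, x < m}.
Hypothesis q_le : {in q, forall x, x <= m}.

Lemma sorted_before_max : sorted leq p.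
Proof.
apply: sorted_leq_pairs => x y sxy; rewrite leqNgt; apply/negP => yx.
have [xp yp] : x \in p /\ y \in p.
  by split; apply: (mem_subseq sxy); rewrite !inE eqxx ?orbT.
have sxym : subseq [:: x; y; m] (p ++ m :: q).
  by apply: (@cat_subseq _ [:: x; y] [:: m] p); rewrite ?sub1seq ?mem_head.
move: (no_bad sxym); rewrite /bad_triple yx.
by rewrite (gtn_eqF (p_lt xp)) (gtn_eqF (p_lt yp)).
Qed.

Lemma eq_below_max_after_max :
  {in m :: q &, forall u v, u != m -> v != m -> u = v}.
Proof.
move=> u v; rewrite !inE => /predU1P[->|uq]; first by rewrite eqxx.
move=> /predU1P[->|vq]; first by rewrite eqxx.
move=> um vm; apply/eqP/negPn/negP => uv.
have bad_mxy x y : x != m -> y != m -> y != x -> ~ subseq [:: x; y] q.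
  move=> xm ym yx sxy.
  have smxy : subseq [:: m; x; y] (p ++ m :: q).
    by apply: subseq_trans (suffix_subseq p _); rewrite /= eqxx.
  have xm' : x < m by rewrite ltn_neqAle xm q_le // (mem_subseq sxy) ?mem_head.
  by move: (no_bad smxy); rewrite /bad_triple xm' ym yx.
by case: (subseq_pair_either uq vq uv); apply: bad_mxy; rewrite // eq_sym.
Qed.

Lemma no_max_after_smaller x k : x \in p -> k < x -> ~ subseq [:: k; m] (m :: q).
Proof.
move=> xp kx skm; have xm := p_lt xp.
have sxkm : subseq [:: x; k; m] (p ++ m :: q).
  by apply: (@cat_subseq _ [:: x] [:: k; m] p); rewrite ?sub1seq.
move: (no_bad sxkm); rewrite /bad_triple kx.
by rewrite (gtn_eqF xm) (gtn_eqF (ltn_trans kx xm)).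
Qed.

End BeforeAndAfterMax.

Lemma no_bad_triple_cat (p q : seq nat) (m c : nat) :
  sorted leq p -> {in p, forall x, x < m} ->
  {in q, forall w, (w == m) || (w == c)} ->
  (forall x, x \in p -> c < x -> ~ subseq [:: c; m] q) ->
  bad_triple_free (p ++ q).
Proof.
move=> sorted_p p_lt q_mc no_cm x y z /subseq_cat_split [s1 [s2 [e s1p s2q]]].
have s2_mc w : w \in s2 -> (w == m) || (w == c) by move/(mem_subseq s2q); apply: q_mc.
case: s1 e s1p => [|x' [|y' s1]] /= e s1p.
- subst s2; rewrite /bad_triple.
  have := s2_mc x; have := s2_mc y; have := s2_mc z; rewrite !inE !eqxx !orbT.
  by do 3 move=> /(_ isT) /orP[/eqP->|/eqP->]; rewrite ?ltnn ?eqxx ?andbF.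
- case: e => ex e2; subst x' s2; move: s1p; rewrite sub1seq => xp.
  apply/negP => /and3P[yx zx zy].
  have /eqP yc : y == c.
    move: (s2_mc y (mem_head _ _)) => /orP[/eqP ym|//].
    by move: (p_lt x xp); rewrite -ym ltnNge ltnW.
  have /eqP zm : z == m.
    by move: (s2_mc z); rewrite !inE eqxx orbT -yc (negbTE zy) orbF => /(_ isT).
  by apply: (no_cm x xp); rewrite -?yc -?zm.
- case: e => ex ey _; subst x' y'; apply/negP => /and3P[yx _ _].
  have sxy : subseq [:: x; y] p.
    by apply: subseq_trans s1p; rewrite /= !eqxx sub0seq.
  by move: (subseq_sorted leq_trans sxy sorted_p); rewrite /= andbT leqNgt yx.
Qed.

Lemma decomposition_of_bad_triple_free a : a != [::] -> bad_triple_free a ->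
  exists p1 q, [/\ a = p1 ++ q, cond_p1 a p1 & cond_p2 a q \/ cond_r2 a q].
Proof.
move=> a0 no_bad; set M := smax a.
have [p [q [ea Mp]]] := split_first_occurrence (smax_mem a0).
have mem_a w : w \in p ++ M :: q -> w \in a by rewrite -ea.
have p_lt : {in p, forall x, x < M}.
  move=> x xp; rewrite ltn_neqAle leq_smax ?mem_a ?mem_cat ?xp // andbT.
  by apply: contraTneq xp => ->.
have q_le : {in q, forall x, x <= M}.
  by move=> x xq; rewrite leq_smax // mem_a // mem_cat inE xq !orbT.
rewrite ea in no_bad.
have eq_low := eq_below_max_after_max no_bad q_le.
exists p, (M :: q); split=> //.
  by split; [exact: sorted_before_max no_bad p_lt | move/smax_mem/p_lt].
pose in_top2 x := (x == M) || (x == premax a).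
have [Mq_top2|/allPn [k kq]] := boolP (all in_top2 (M :: q)); first by left.
rewrite negb_or => /andP[kM kP]; right.
have k_lt : k < premax a.
  have ka : k \in a by rewrite mem_a // mem_cat kq orbT.
  by rewrite ltn_neqAle kP leq_premax // ltn_neqAle kM leq_smax.
have [Pa PM] : premax a \in a /\ premax a < M.
  exact: premax_gt0 (leq_ltn_trans (leq0n k) k_lt).
have Pp : premax a \in p.
  have : premax a \in p ++ M :: q by rewrite -ea.
  rewrite mem_cat => /orP[//|Pq]; have PM' : premax a != M by rewrite ltn_eqF.
  by move: k_lt; rewrite (eq_low _ _ Pq kq PM' kM) ltnn.
have no_kM := no_max_after_smaller no_bad p_lt Pp k_lt.
have Mq_mk : {in M :: q, forall w, (w == M) || (w == k)}.
  by move=> w wq; case: (eqVneq w M) => //= wM; rewrite (eq_low w k).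
have [[|i] [[|j] e]] := nseq_cat_nseq_shape Mq_mk no_kM; last by exists i.+1, j.+1, k.
- by [].
- by case: e => Mk; rewrite Mk eqxx in kM.
- by move: kq; rewrite e cats0 mem_nseq (negbTE kM) andbF.
Qed.

Lemma bad_triple_free_of_decomposition a p1 q : a = p1 ++ q ->
  cond_p1 a p1 -> cond_p2 a q \/ cond_r2 a q -> bad_triple_free a.
Proof.
move=> ea [sorted_p1 p1_max] q_shape.
have p1_lt : {in p1, forall x, x < smax a}.
  move=> x xp; apply: leq_ltn_trans (p1_max _); first exact: leq_smax.
  by apply: contraTneq xp => ->.
have p1_le : {in p1, forall x, x <= premax a}.
  by move=> x xp; rewrite leq_premax ?p1_lt // ea mem_cat xp.
rewrite ea; case: q_shape => [[_ [q_MP _]]|[i [j [k [_ [_ [k_lt ->]]]]]]].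
  apply: (no_bad_triple_cat (m := smax a) (c := premax a)) => //; first exact/allP.
  by move=> x /p1_le; rewrite leqNgt => /negP.
have [_ PM] := premax_gt0 (leq_ltn_trans (leq0n k) k_lt).
have kM : k != smax a by rewrite ltn_eqF // (ltn_trans k_lt PM).
apply: (no_bad_triple_cat (m := smax a) (c := k)) => // [w|x _ _].
  by rewrite mem_cat !mem_nseq => /orP[/andP[_ ->]|/andP[_ ->]]; rewrite ?orbT.
exact: not_subseq_nseq_cat.
Qed.

Theorem mainTheorem2 (n : nat) (a : seq nat) :
  1 <= n -> inv_seq n a ->
  (avoids a [:: 1; 0; 2] /\ avoids a [:: 2; 0; 1] /\ avoids a [:: 2; 1; 0]) <->
  exists p1 q, a = p1 ++ q /\ cond_p1 a p1 /\ (cond_p2 a q \/ cond_r2 a q).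
Proof.
move=> n_pos [size_a _]; rewrite avoids_102_201_210P.
have a0 : a != [::] by apply: contraTneq n_pos => a_nil; rewrite -size_a a_nil.
split=> [/(decomposition_of_bad_triple_free a0) [p1 [q [ea cp1 cq]]]|].
  by exists p1, q.
by move=> [p1 [q [ea [cp1 cq]]]]; apply: bad_triple_free_of_decomposition ea cp1 cq.
Qed.
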